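(* For all matroids $M$ and $N$ on disjoint finite sets, $$\mathrm{T}(M\mathbin{\Box} N)=\begin{cases} M\mathbin{\Box}\mathrm{T}N & \text{if } \rho(N)>0,\\ \mathrm{T}M\mathbin{\Box} N & \text{if } \rho(N)=0,\end{cases}\qquad \mathrm{L}(M\mathbin{\Box} N)=\begin{cases}\mathrm{L}M\mathbin{\Box} N & \text{if } \nu(M)>0,\\ M\mathbin{\Box}\mathrm{L}N & \text{if } \nu(M)=0.\end{cases}$$
   Context: For a matroid $M$ on $S$ write $\rho_M$ for rank, $\rho(M)=\rho_M(S)$, $\nu_M(A)=|A|-\rho_M(A)$, $\nu(M)=\nu_M(S)$, $\lambda_M(A)=\rho(M)-\rho_M(A)$. For matroids $M$ on $S$ and $N$ on $T$ with $S\cap T=\emptyset$, the free product $M\mathbin{\Box} N$ is the matroid on $S\cup T$ whose independent sets are those $A$ with $A\cap S$ independent in $M$ and $\lambda_M(A\cap S)\geq\nu_N(A\cap T)$. The truncation $\mathrm{T}M$ has as independent sets the independent sets $A$ of $M$ with $|A|\leq\max\{0,\rho(M)-1\}$; the Higgs lift $\mathrm{L}M$ has as independent sets the subsets $A$ of the ground set with $\nu_M(A)\leq 1$. *)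

From mathcomp Require Import all_boot.
Set Implicit Arguments. Unset Strict Implicit. Unset Printing Implicit Defensive.

(* A matroid on a finite ground set E (the whole finType) is given by its
   family of independent sets. *)
Definition is_matroid (E : finType) (I : {set {set E}}) : Prop :=
  [/\ set0 \in I,
      (forall A B : {set E}, B \in I -> A \subset B -> A \in I) &
      (forall A B : {set E}, A \in I -> B \in I -> #|A| < #|B| ->
         exists2 x, x \in B :\: A & x |: A \in I)].

Definition mrank (E : finType) (I : {set {set E}}) (A : {set E}) : nat :=
  \max_(B in I | B \subset A) #|B|.
Definition nullity (E : finType) (I : {set {set E}}) (A : {set E}) : nat :=
  #|A| - mrank I A.
Definition mlambda (E : finType) (I : {set {set E}}) (A : {set E}) : nat :=
  mrank I setT - mrank I A.

Definition freeprod (S T : finType) (I : {set {set S}}) (J : {set {set T}})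
  : {set {set (S + T)}} :=
  [set A : {set (S + T)} | (inl @^-1: A \in I) &&
     (nullity J (inr @^-1: A) <= mlambda I (inl @^-1: A))].

Definition trunc (E : finType) (I : {set {set E}}) : {set {set E}} :=
  [set A in I | #|A| <= (mrank I setT).-1].

Definition hlift (E : finType) (I : {set {set E}}) : {set {set E}} :=
  [set A : {set E} | nullity I A <= 1].

From mathcomp Require Import all_boot zify.
Set Implicit Arguments. Unset Strict Implicit. Unset Printing Implicit Defensive.

(* Everything reduces to ranks.  Writing A_S and A_T for the two halves of
   A, the free product has rank function
     rho_{M [] N}(A) = min(rho_M(A_S) + |A_T|, rho(M) + rho_N(A_T)),
   the bound being attained by a basis of A_S together with a basis of A_T
   padded by further elements of A_T.  Hence A is independent iff A_S is
   independent in M and |A| <= rho(M) + rho_N(A_T), and nu_{M [] N}(A) <= 1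
   iff nu_M(A_S) <= 1 and |A| <= rho(M) + 1 + rho_N(A_T).  Since
   rho_{TM}(A) = min(rho_M(A), rho(M) - 1) and
   rho_{LM}(A) = min(|A|, rho_M(A) + 1), both sides of each identity reduce to
   the same inequalities. *)

Lemma ex_subset_card (E : finType) (B : {set E}) k :
  k <= #|B| -> exists2 C : {set E}, C \subset B & #|C| = k.
Proof.
move=> /card_geqP[s [s_uniq <- sB]].
exists [set x in s]; first by apply/subsetP => x; rewrite inE => /sB.
by rewrite cardsE; apply/card_uniqP.
Qed.

Lemma ex_between_card (E : finType) (C B : {set E}) k :
  C \subset B -> #|C| <= k <= #|B| ->
  exists D : {set E}, [/\ C \subset D, D \subset B & #|D| = k].
Proof.
move=> CB /andP[Ck kB].
have [R RBC cardR] : exists2 R : {set E}, R \subset B :\: C & #|R| = #|B| - k.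
  by apply: ex_subset_card; rewrite cardsDS //; lia.
have RB : R \subset B := subset_trans RBC (subsetDl B C).
exists (B :\: R); split; rewrite ?subsetDl ?cardsDS // ?cardR; last lia.
apply/subsetP => x xC; rewrite inE (subsetP CB x xC) andbT.
by apply/negP => /(subsetP RBC); rewrite inE xC.
Qed.

Section Mrank.
Variables (E : finType) (I : {set {set E}}).
Implicit Types A B : {set E}.

Lemma card_le_mrank A B : B \in I -> B \subset A -> #|B| <= mrank I A.
Proof. by move=> BI BA; apply: (bigmax_sup B) => //; rewrite BI. Qed.

Lemma mrank_le_card A : mrank I A <= #|A|.
Proof. by apply/bigmax_leqP => B /andP[_ BA]; apply: subset_leq_card. Qed.

Lemma mrankS A B : A \subset B -> mrank I A <= mrank I B.
Proof.
move=> AB; apply/bigmax_leqP => C /andP[CI CA].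
exact: card_le_mrank CI (subset_trans CA AB).
Qed.

Lemma mrank_indep A : A \in I -> mrank I A = #|A|.
Proof. by move=> AI; apply/eqP; rewrite eqn_leq mrank_le_card card_le_mrank. Qed.

End Mrank.

Section RankOfTruncationAndLift.
Variables (E : finType) (I : {set {set E}}).
Implicit Types A B : {set E}.
Hypothesis I0 : set0 \in I.

Lemma ex_basis A : exists B, [/\ B \in I, B \subset A & #|B| = mrank I A].
Proof.
have : 0 < #|[pred B | (B \in I) && (B \subset A)]|.
  by apply/card_gt0P; exists set0; rewrite inE I0 sub0set.
case/(eq_bigmax_cond (fun B : {set E} => #|B|)) => B /andP[BI BA] rankE.
by exists B; split; rewrite // /mrank rankE.
Qed.

Lemma nullity_eq0 A : (nullity I A == 0) = (A \in I).
Proof.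
apply/idP/idP => [|AI]; last by rewrite /nullity mrank_indep ?subnn.
have [B [BI BA cardB]] := ex_basis A.
rewrite /nullity subn_eq0 -cardB => AB.
suff -> : A = B by [].
by apply/eqP; rewrite eq_sym eqEcard BA.
Qed.

Lemma mrank_hlift A : mrank (hlift I) A = minn #|A| (mrank I A).+1.
Proof.
apply/eqP; rewrite eqn_leq; apply/andP; split.
  apply/bigmax_leqP => B /andP[]; rewrite inE /nullity => nullB BA.
  have := mrankS I BA; rewrite leq_min subset_leq_card //=; lia.
have [B [BI BA cardB]] := ex_basis A.
have [|D [BD DA cardD]] := ex_between_card (k := minn #|A| (mrank I A).+1) BA.
  by rewrite cardB leq_min leqnSn mrank_le_card geq_minl.
rewrite -cardD; apply: (card_le_mrank _ DA); rewrite inE /nullity.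
have := card_le_mrank BI BD; rewrite cardB; lia.
Qed.

Hypothesis I_down : forall A B, B \in I -> A \subset B -> A \in I.

Lemma mrank_trunc A : mrank (trunc I) A = minn (mrank I A) (mrank I setT).-1.
Proof.
apply/eqP; rewrite eqn_leq; apply/andP; split.
  apply/bigmax_leqP => B /andP[]; rewrite inE => /andP[BI cardB] BA.
  by rewrite leq_min cardB card_le_mrank.
have [B [BI BA cardB]] := ex_basis A.
have [|D DB cardD] := ex_subset_card (B := B) (k := minn (mrank I A) (mrank I setT).-1).
  by rewrite cardB geq_minl.
rewrite -cardD; apply: (card_le_mrank _ (subset_trans DB BA)).
by rewrite inE (I_down BI DB) cardD geq_minr.
Qed.

End RankOfTruncationAndLift.

Section DisjointUnion.
Variables S T : finType.
Implicit Types (A : {set S + T}) (X : {set S}) (Y : {set T}).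

Lemma card_preim_inl_inr A : #|A| = #|inl @^-1: A| + #|inr @^-1: A|.
Proof.
by rewrite -!sum1_card big_sumType; congr (_ + _); apply: eq_bigl => i; rewrite !inE.
Qed.

Definition sumset X Y : {set S + T} :=
  [set z | match z with inl x => x \in X | inr y => y \in Y end].

Lemma preim_inl_sumset X Y : inl @^-1: sumset X Y = X.
Proof. by apply/setP => x; rewrite !inE. Qed.

Lemma preim_inr_sumset X Y : inr @^-1: sumset X Y = Y.
Proof. by apply/setP => y; rewrite !inE. Qed.

Lemma sumset_subset X Y A :
  X \subset inl @^-1: A -> Y \subset inr @^-1: A -> sumset X Y \subset A.
Proof.
move=> /subsetP XA /subsetP YA; apply/subsetP => -[x|y]; rewrite inE.
  by move/XA; rewrite inE.
by move/YA; rewrite inE.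
Qed.

Lemma freeprodE (I : {set {set S}}) (J : {set {set T}}) A : (A \in freeprod I J) =
  (inl @^-1: A \in I) && (#|A| <= mrank I setT + mrank J (inr @^-1: A)).
Proof.
rewrite inE /nullity /mlambda card_preim_inl_inr.
case XI: (inl @^-1: A \in I) => //=; rewrite (mrank_indep XI).
have := card_le_mrank XI (subsetT _); have := mrank_le_card J (inr @^-1: A).
by move=> ? ?; apply/idP/idP; lia.
Qed.

End DisjointUnion.

Section FreeProduct.
Variables (S T : finType) (I : {set {set S}}) (J : {set {set T}}).
Implicit Types A : {set S + T}.
Hypotheses (I0 : set0 \in I) (J0 : set0 \in J).

Lemma mrank_freeprod A :
  mrank (freeprod I J) A = minn (mrank I (inl @^-1: A) + #|inr @^-1: A|)
                                (mrank I setT + mrank J (inr @^-1: A)).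
Proof.
set X := inl @^-1: A; set Y := inr @^-1: A.
apply/eqP; rewrite eqn_leq; apply/andP; split.
  apply/bigmax_leqP => B /andP[]; rewrite freeprodE => /andP[BXI cardB] BA.
  have [BXX BYY] := (preimsetS inl BA, preimsetS inr BA).
  rewrite leq_min card_preim_inl_inr leq_add ?card_le_mrank ?subset_leq_card //=.
  by rewrite -card_preim_inl_inr (leq_trans cardB) // leq_add2l mrankS.
have [BX [BXI BXX cardBX]] := ex_basis I0 X.
have [BY [BYI BYY cardBY]] := ex_basis J0 Y.
have rankX := mrankS I (subsetT X); have rankY := mrank_le_card J Y.
have [|D [BYD DY cardD]] := ex_between_card BYY
  (k := minn (mrank I X + #|Y|) (mrank I setT + mrank J Y) - #|BX|); first lia.
have rankD : mrank J D = mrank J Y.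
  by apply/eqP; rewrite eqn_leq mrankS //= -cardBY card_le_mrank.
have cardBXD : #|sumset BX D| = #|BX| + #|D|.
  by rewrite card_preim_inl_inr preim_inl_sumset preim_inr_sumset.
have inFP : sumset BX D \in freeprod I J.
  rewrite freeprodE preim_inl_sumset preim_inr_sumset BXI rankD cardBXD /=; lia.
apply: leq_trans (card_le_mrank inFP (sumset_subset BXX DY)); lia.
Qed.

Lemma mrank_freeprodT : mrank (freeprod I J) setT = mrank I setT + mrank J setT.
Proof.
rewrite mrank_freeprod !preimsetT; apply/minn_idPr.
by rewrite leq_add2l mrank_le_card.
Qed.

Lemma nullity_freeprod A : nullity (freeprod I J) A =
  maxn (nullity I (inl @^-1: A)) (#|A| - (mrank I setT + mrank J (inr @^-1: A))).
Proof. by rewrite /nullity mrank_freeprod card_preim_inl_inr; lia. Qed.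

Lemma hlift_freeprodE A : (A \in hlift (freeprod I J)) =
  (nullity I (inl @^-1: A) <= 1) && (#|A| <= (mrank I setT).+1 + mrank J (inr @^-1: A)).
Proof. by rewrite inE nullity_freeprod geq_max leq_subLR addn1 addSn. Qed.

Hypothesis I_down : forall X Y : {set S}, Y \in I -> X \subset Y -> X \in I.
Hypothesis J_down : forall X Y : {set T}, Y \in J -> X \subset Y -> X \in J.

Lemma trunc_freeprod_rank_gt0 :
  0 < mrank J setT -> trunc (freeprod I J) = freeprod I (trunc J).
Proof.
move=> rankN_gt0; apply/setP => A.
rewrite inE mrank_freeprodT !freeprodE (mrank_trunc J0 J_down).
by have := mrankS J (subsetT (inr @^-1: A)); case: (_ \in I) => //= ?; lia.
Qed.

Lemma trunc_freeprod_rank0 :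
  mrank J setT = 0 -> trunc (freeprod I J) = freeprod (trunc I) J.
Proof.
move=> rankN0; apply/setP => A.
rewrite inE mrank_freeprodT !freeprodE inE (mrank_trunc I0 I_down) rankN0.
have := mrankS J (subsetT (inr @^-1: A)); have := card_preim_inl_inr A.
by case: (_ \in I) => //= ? ?; lia.
Qed.

Lemma hlift_freeprod_nullity_gt0 :
  0 < nullity I setT -> hlift (freeprod I J) = freeprod (hlift I) J.
Proof.
rewrite /nullity => nullM_gt0; apply/setP => A.
have /minn_idPr rankLM : (mrank I setT).+1 <= #|[set: S]| by rewrite -subn_gt0.
by rewrite hlift_freeprodE freeprodE inE (mrank_hlift I0) rankLM.
Qed.

Lemma hlift_freeprod_nullity0 :
  nullity I setT = 0 -> hlift (freeprod I J) = freeprod I (hlift J).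
Proof.
move/eqP; rewrite nullity_eq0 // => freeM; apply/setP => A.
rewrite hlift_freeprodE freeprodE (mrank_hlift J0) card_preim_inl_inr.
set X := inl @^-1: A; set Y := inr @^-1: A.
have XI : X \in I := I_down freeM (subsetT X).
have := card_le_mrank XI (subsetT X).
by rewrite XI /nullity (mrank_indep XI) subnn /=; lia.
Qed.

End FreeProduct.

Theorem proposition5p4 (S T : finType) (I : {set {set S}}) (J : {set {set T}}) :
  is_matroid I -> is_matroid J ->
  trunc (freeprod I J) =
    (if 0 < mrank J setT then freeprod I (trunc J) else freeprod (trunc I) J)
  /\
  hlift (freeprod I J) =
    (if 0 < nullity I setT then freeprod (hlift I) J else freeprod I (hlift J)).
Proof.
case=> I0 I_down _ [J0 J_down _]; split; case: ifP => [|/negbT].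
- exact: trunc_freeprod_rank_gt0.
- by rewrite -eqn0Ngt => /eqP; apply: trunc_freeprod_rank0.
- exact: hlift_freeprod_nullity_gt0.
- by rewrite -eqn0Ngt => /eqP; apply: hlift_freeprod_nullity0.
Qed.
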